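(* For all (not necessarily typable) terms $M,N_1,N_2$ of $\lambda^{\triangleright}$: if $M\to^*N_1$ and $M\to^*N_2$, then there exists $N$ such that $N_1\to^*N$ and $N_2\to^*N$.
   Context: Terms of $\lambda^{\triangleright}$: transition variables $\alpha,\beta,\dots$; a transition $A,B$ is a finite sequence of transition variables ($\varepsilon$ empty, $AB$ concatenation). Types $\tau ::= b \mid \tau\to\tau \mid \triangleright_\alpha\tau \mid \forall\alpha.\tau$. Terms $M ::= x \mid M\,M \mid \lambda x{:}\tau.M \mid \blacktriangleright_\alpha M \mid \blacktriangleleft_\alpha M \mid \Lambda\alpha.M \mid M\,A$ (quotation, unquotation, transition abstraction, instantiation by a transition); $x$ is bound in $\lambda x{:}\tau.M$ and $\alpha$ in $\Lambda\alpha.M$. For $A=\alpha_1\cdots\alpha_n$: $\blacktriangleright_A M=\blacktriangleright_{\alpha_1}\cdots\blacktriangleright_{\alpha_n}M$, $\blacktriangleleft_A M=\blacktriangleleft_{\alpha_n}\cdots\blacktriangleleft_{\alpha_1}M$ (identity when $A=\varepsilon$), and similarly $\triangleright_A\tau$. $M[x:=N]$ is capture-avoiding term substitution; $M[\alpha:=B]$ is capture-avoiding substitution of a transition $B$ for $\alpha$, replacing $\alpha$ by $B$ in transitions and $\triangleright_\alpha,\blacktriangleright_\alpha,\blacktriangleleft_\alpha$ by $\triangleright_B,\blacktriangleright_B,\blacktriangleleft_B$. Reduction $M\to N$ is the least relation closed under all term constructors (reduction anywhere, including under binders and quotations) containing $(\lambda x{:}\tau.M)\,N\to M[x:=N]$,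 $\blacktriangleleft_\alpha\blacktriangleright_\alpha M\to M$, $(\Lambda\alpha.M)\,A\to M[\alpha:=A]$; $\to^*$ is its reflexive-transitive closure. *)

(* Raw (untyped) terms of lambda^triangleright, in de Bruijn
   form: term variables and transition variables are two separate de Bruijn
   namespaces (this makes substitution capture-avoiding by construction). *)
From Stdlib Require Import List Relations.
Import ListNotations.

(* transition variables are de Bruijn indices; a transition is a finite
   sequence of transition variables ([] = epsilon, ++ = concatenation) *)
Definition tvar := nat.
Definition transition := list tvar.

Inductive ty : Type :=
| TBase : nat -> ty
| TArr : ty -> ty -> ty
| TLater : tvar -> ty -> ty
| TAll : ty -> ty.                  (* forall alpha. tau  (binds index 0) *)

Inductive tm : Type :=
| Var : nat -> tm
| App : tm -> tm -> tm
| Lam : ty -> tm -> tm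
| Quo : tvar -> tm -> tm
| Unq : tvar -> tm -> tm
| TLam : tm -> tm                   (* Lambda alpha. M (binds transition index 0) *)
| TApp : tm -> transition -> tm.

Definition tsub := tvar -> transition.

Definition up_tsub (s : tsub) : tsub :=
  fun n => match n with 0 => [0] | S m => map S (s m) end.

Definition subst_trans (s : tsub) (A : transition) : transition :=
  flat_map s A.

Definition later_seq (A : transition) (t : ty) : ty :=
  fold_right TLater t A.
Definition quo_seq (A : transition) (M : tm) : tm :=
  fold_right Quo M A.
(* <<|_A M = <<|_an ... <<|_a1 M *)
Definition unq_seq (A : transition) (M : tm) : tm :=
  fold_left (fun N a => Unq a N) A M.

Fixpoint ty_tsubst (s : tsub) (t : ty) : ty :=
  match t with
  | TBase b => TBase b
  | TArr t1 t2 => TArr (ty_tsubst s t1) (ty_tsubst s t2)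
  | TLater a t1 => later_seq (s a) (ty_tsubst s t1)
  | TAll t1 => TAll (ty_tsubst (up_tsub s) t1)
  end.

Fixpoint tm_tsubst (s : tsub) (M : tm) : tm :=
  match M with
  | Var x => Var x
  | App M1 M2 => App (tm_tsubst s M1) (tm_tsubst s M2)
  | Lam t M1 => Lam (ty_tsubst s t) (tm_tsubst s M1)
  | Quo a M1 => quo_seq (s a) (tm_tsubst s M1)
  | Unq a M1 => unq_seq (s a) (tm_tsubst s M1)
  | TLam M1 => TLam (tm_tsubst (up_tsub s) M1)
  | TApp M1 A => TApp (tm_tsubst s M1) (subst_trans s A)
  end.

Definition tshift : tsub := fun n => [S n].

Fixpoint tm_ren (r : nat -> nat) (M : tm) : tm :=
  match M with
  | Var x => Var (r x)
  | App M1 M2 => App (tm_ren r M1) (tm_ren r M2)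
  | Lam t M1 => Lam t (tm_ren (fun n => match n with 0 => 0 | S m => S (r m) end) M1)
  | Quo a M1 => Quo a (tm_ren r M1)
  | Unq a M1 => Unq a (tm_ren r M1)
  | TLam M1 => TLam (tm_ren r M1)
  | TApp M1 A => TApp (tm_ren r M1) A
  end.

Definition up_sub (s : nat -> tm) : nat -> tm :=
  fun n => match n with 0 => Var 0 | S m => tm_ren S (s m) end.

Fixpoint tm_subst (s : nat -> tm) (M : tm) : tm :=
  match M with
  | Var x => s x
  | App M1 M2 => App (tm_subst s M1) (tm_subst s M2)
  | Lam t M1 => Lam t (tm_subst (up_sub s) M1)
  | Quo a M1 => Quo a (tm_subst s M1)
  | Unq a M1 => Unq a (tm_subst s M1)
  | TLam M1 => TLam (tm_subst (fun n => tm_tsubst tshift (s n)) M1)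
  | TApp M1 A => TApp (tm_subst s M1) A
  end.

Definition subst1 (M N : tm) : tm :=
  tm_subst (fun n => match n with 0 => N | S m => Var m end) M.

Definition tsubst1 (M : tm) (A : transition) : tm :=
  tm_tsubst (fun n => match n with 0 => A | S m => [m] end) M.

Inductive step : tm -> tm -> Prop :=
| step_beta : forall t M N, step (App (Lam t M) N) (subst1 M N)
| step_quo : forall a M, step (Unq a (Quo a M)) M
| step_tbeta : forall M A, step (TApp (TLam M) A) (tsubst1 M A)
| step_appl : forall M M' N, step M M' -> step (App M N) (App M' N)
| step_appr : forall M N N', step N N' -> step (App M N) (App M N')
| step_lam : forall t M M', step M M' -> step (Lam t M) (Lam t M')
| step_Quo : forall a M M', step M M' -> step (Quo a M) (Quo a M')
| step_Unq : forall a M M', step M M' -> step (Unq a M) (Unq a M')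
| step_tlam : forall M M', step M M' -> step (TLam M) (TLam M')
| step_tapp : forall M M' A, step M M' -> step (TApp M A) (TApp M' A).

Definition steps : tm -> tm -> Prop := clos_refl_trans tm step.

(* Takahashi's method.  Parallel reduction [par] contracts any set of
   redexes at once, lies between [step] and [steps], and the complete
   development [rho] (contract every redex present in the term) satisfies the
   triangle property [par M N -> par N (rho M)], which makes [par], hence
   [steps], confluent.  The calculus-specific point is that instantiating a
   transition variable turns one quotation or unquotation into a sequence of
   them; [par] must therefore be closed under transition substitution, which
   works because [par] contracts [Unq a M] to [N] as soon as [M] reduces to
   [Quo a N], so a sequence [unq_seq A] facing [quo_seq A] cancels
   letter by letter. *)
From Stdlib Require Import List Relations.
From Stdlib Require Import FunctionalExtensionality.
Import ListNotations.

Section TriangleConfluence.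

Variables (A : Type) (R P : relation A) (dev : A -> A).

Definition confluent (Q : relation A) : Prop :=
  forall x y1 y2, Q x y1 -> Q x y2 -> exists z, Q y1 z /\ Q y2 z.

Hypothesis R_sub_P : forall x y, R x y -> P x y.
Hypothesis P_sub_clos_R : forall x y, P x y -> clos_refl_trans A R x y.
Hypothesis P_triangle : forall x y, P x y -> P y (dev x).

Lemma P_strip x y z : P x y -> clos_refl_trans A P x z ->
  exists w, clos_refl_trans A P y w /\ P z w.
Proof.
  intros Pxy Pxz; revert y Pxy; induction Pxz as [x z Pxz | x | x z1 z _ IH1 _ IH2];
    intros y Pxy.
  - exists (dev x); split; [apply rt_step|]; apply P_triangle; assumption.
  - exists y; split; [apply rt_refl | assumption].
  - destruct (IH1 y Pxy) as (w1 & Pyw1 & Pz1w1).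
    destruct (IH2 w1 Pz1w1) as (w2 & Pw1w2 & Pzw2).
    exists w2; split; [apply rt_trans with w1 |]; assumption.
Qed.

Lemma clos_P_confluent : confluent (clos_refl_trans A P).
Proof.
  intros x y1 y2 Pxy1; revert y2.
  induction Pxy1 as [x y1 Pxy1 | x | x y z _ IH1 _ IH2]; intros y2 Pxy2.
  - destruct (P_strip x y1 y2 Pxy1 Pxy2) as (w & ? & ?).
    exists w; split; [| apply rt_step]; assumption.
  - exists y2; split; [assumption | apply rt_refl].
  - destruct (IH1 y2 Pxy2) as (w1 & Pyw1 & Py2w1).
    destruct (IH2 w1 Pyw1) as (w2 & Pzw2 & Pw1w2).
    exists w2; split; [| apply rt_trans with w1]; assumption.
Qed.

Lemma clos_R_iff_clos_P x y :
  clos_refl_trans A R x y <-> clos_refl_trans A P x y.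
Proof.
  split; intros Rxy.
  - induction Rxy; eauto using rt_step, rt_refl, rt_trans.
  - apply clos_rt_idempotent.
    induction Rxy; eauto using rt_step, rt_refl, rt_trans.
Qed.

Theorem confluent_of_triangle : confluent (clos_refl_trans A R).
Proof.
  intros x y1 y2 Rxy1 Rxy2.
  apply clos_R_iff_clos_P in Rxy1, Rxy2.
  destruct (clos_P_confluent x y1 y2 Rxy1 Rxy2) as (z & ? & ?).
  exists z; split; apply clos_R_iff_clos_P; assumption.
Qed.

End TriangleConfluence.

Lemma flat_map_map {X Y Z} (f : Y -> list Z) (g : X -> Y) l :
  flat_map f (map g l) = flat_map (fun x => f (g x)) l.
Proof. induction l; simpl; congruence. Qed.

Lemma map_flat_map {X Y Z} (f : X -> list Y) (g : Y -> Z) l :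
  map g (flat_map f l) = flat_map (fun x => map g (f x)) l.
Proof. induction l; simpl; [reflexivity|]. rewrite map_app; congruence. Qed.

Lemma flat_map_singleton {X Y} (f : X -> list Y) (g : X -> Y) l :
  (forall x, f x = [g x]) -> flat_map f l = map g l.
Proof. intros Hf; induction l; simpl; [reflexivity|]. rewrite Hf, IHl; reflexivity. Qed.

Lemma quo_seq_app A B M : quo_seq (A ++ B) M = quo_seq A (quo_seq B M).
Proof. apply fold_right_app. Qed.

Lemma later_seq_app A B T : later_seq (A ++ B) T = later_seq A (later_seq B T).
Proof. apply fold_right_app. Qed.

Lemma unq_seq_app A B M : unq_seq (A ++ B) M = unq_seq B (unq_seq A M).
Proof. apply fold_left_app. Qed.

Lemma unq_seq_cons a A M : unq_seq (a :: A) M = unq_seq A (Unq a M).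
Proof. reflexivity. Qed.

Definition tcomp (t s : tsub) : tsub := fun n => subst_trans s (t n).

Lemma subst_trans_comp t s A :
  subst_trans s (subst_trans t A) = subst_trans (tcomp t s) A.
Proof.
  unfold subst_trans, tcomp; induction A; simpl; [reflexivity|].
  rewrite flat_map_app, IHA; reflexivity.
Qed.

Lemma up_tsub_comp t s : up_tsub (tcomp t s) = tcomp (up_tsub t) (up_tsub s).
Proof.
  apply functional_extensionality; intros [|m]; unfold tcomp, subst_trans; simpl.
  - reflexivity.
  - rewrite flat_map_map, map_flat_map; reflexivity.
Qed.

Lemma ty_tsubst_later_seq s A T :
  ty_tsubst s (later_seq A T) = later_seq (subst_trans s A) (ty_tsubst s T).
Proof.
  induction A; simpl; [reflexivity|].
  unfold subst_trans in *; simpl; rewrite IHA, later_seq_app; reflexivity.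
Qed.

Lemma ty_tsubst_comp T : forall t s,
  ty_tsubst s (ty_tsubst t T) = ty_tsubst (tcomp t s) T.
Proof.
  induction T; intros; simpl.
  - reflexivity.
  - rewrite IHT1, IHT2; reflexivity.
  - rewrite ty_tsubst_later_seq, IHT; reflexivity.
  - rewrite IHT, up_tsub_comp; reflexivity.
Qed.

Lemma ty_tsubst_id T : forall s, (forall n, s n = [n]) -> ty_tsubst s T = T.
Proof.
  induction T; intros s Hs; simpl.
  - reflexivity.
  - rewrite IHT1, IHT2; auto.
  - rewrite Hs, IHT; auto.
  - rewrite IHT; [reflexivity|]. intros [|m]; simpl; [|rewrite Hs]; reflexivity.
Qed.

Lemma tm_tsubst_quo_seq s A M :
  tm_tsubst s (quo_seq A M) = quo_seq (subst_trans s A) (tm_tsubst s M).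
Proof.
  induction A; simpl; [reflexivity|].
  unfold subst_trans in *; simpl; rewrite IHA, quo_seq_app; reflexivity.
Qed.

Lemma tm_tsubst_unq_seq s A : forall M,
  tm_tsubst s (unq_seq A M) = unq_seq (subst_trans s A) (tm_tsubst s M).
Proof.
  induction A; intros; [reflexivity|].
  rewrite unq_seq_cons, IHA; unfold subst_trans; cbn [flat_map].
  rewrite unq_seq_app; reflexivity.
Qed.

Lemma tm_tsubst_comp M : forall t s,
  tm_tsubst s (tm_tsubst t M) = tm_tsubst (tcomp t s) M.
Proof.
  induction M; intros; simpl.
  - reflexivity.
  - rewrite IHM1, IHM2; reflexivity.
  - rewrite ty_tsubst_comp, IHM; reflexivity.
  - rewrite tm_tsubst_quo_seq, IHM; reflexivity.
  - rewrite tm_tsubst_unq_seq, IHM; reflexivity.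
  - rewrite IHM, up_tsub_comp; reflexivity.
  - rewrite IHM, subst_trans_comp; reflexivity.
Qed.

Lemma tm_tsubst_id M : forall s, (forall n, s n = [n]) -> tm_tsubst s M = M.
Proof.
  assert (up_id : forall s, (forall n, s n = [n]) -> forall n, up_tsub s n = [n]).
  { intros s Hs [|m]; simpl; [|rewrite Hs]; reflexivity. }
  induction M; intros s Hs; simpl; rewrite ?Hs.
  - reflexivity.
  - rewrite IHM1, IHM2; auto.
  - rewrite ty_tsubst_id, IHM; auto.
  - rewrite IHM; auto.
  - rewrite IHM; auto.
  - rewrite IHM; auto.
  - rewrite IHM by assumption. unfold subst_trans.
    rewrite (flat_map_singleton _ (fun x => x)), map_id; auto.
Qed.

Lemma tm_ren_quo_seq r A M : tm_ren r (quo_seq A M) = quo_seq A (tm_ren r M).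
Proof. induction A; simpl; congruence. Qed.

Lemma tm_ren_unq_seq r A : forall M, tm_ren r (unq_seq A M) = unq_seq A (tm_ren r M).
Proof. induction A; intros; [reflexivity|]. rewrite !unq_seq_cons, IHA; reflexivity. Qed.

Lemma tm_subst_quo_seq s A M : tm_subst s (quo_seq A M) = quo_seq A (tm_subst s M).
Proof. induction A; simpl; congruence. Qed.

Lemma tm_subst_unq_seq s A : forall M, tm_subst s (unq_seq A M) = unq_seq A (tm_subst s M).
Proof. induction A; intros; [reflexivity|]. rewrite !unq_seq_cons, IHA; reflexivity. Qed.

Lemma tm_ren_tsubst M : forall r s, tm_ren r (tm_tsubst s M) = tm_tsubst s (tm_ren r M).
Proof.
  induction M; intros; simpl; rewrite ?IHM, ?IHM1, ?IHM2; try reflexivity.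
  - rewrite tm_ren_quo_seq, IHM; reflexivity.
  - rewrite tm_ren_unq_seq, IHM; reflexivity.
Qed.

Lemma tm_ren_ren M : forall r r', tm_ren r (tm_ren r' M) = tm_ren (fun n => r (r' n)) M.
Proof.
  induction M; intros; simpl; rewrite ?IHM, ?IHM1, ?IHM2; try reflexivity.
  do 2 f_equal; apply functional_extensionality; intros [|m]; reflexivity.
Qed.

Lemma tm_subst_ren M : forall s r, tm_subst s (tm_ren r M) = tm_subst (fun n => s (r n)) M.
Proof.
  induction M; intros; simpl; rewrite ?IHM, ?IHM1, ?IHM2; try reflexivity.
  do 2 f_equal; apply functional_extensionality; intros [|m]; reflexivity.
Qed.

Lemma tm_ren_subst M : forall r s,
  tm_ren r (tm_subst s M) = tm_subst (fun n => tm_ren r (s n)) M.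
Proof.
  induction M; intros; simpl; rewrite ?IHM, ?IHM1, ?IHM2; try reflexivity.
  - do 2 f_equal; apply functional_extensionality; intros [|m]; simpl; [reflexivity|].
    rewrite !tm_ren_ren; reflexivity.
  - do 2 f_equal; apply functional_extensionality; intros n; apply tm_ren_tsubst.
Qed.

Lemma tm_tsubst_subst M : forall t s,
  tm_tsubst t (tm_subst s M) = tm_subst (fun n => tm_tsubst t (s n)) (tm_tsubst t M).
Proof.
  induction M; intros; simpl; rewrite ?IHM, ?IHM1, ?IHM2; try reflexivity.
  - do 2 f_equal; apply functional_extensionality; intros [|m]; simpl; [reflexivity|].
    symmetry; apply tm_ren_tsubst.
  - rewrite tm_subst_quo_seq; reflexivity.
  - rewrite tm_subst_unq_seq; reflexivity.
  - do 2 f_equal; apply functional_extensionality; intros n.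
    rewrite !tm_tsubst_comp; f_equal.
    apply functional_extensionality; intros k.
    unfold tcomp, subst_trans, tshift; simpl.
    rewrite app_nil_r, (flat_map_singleton _ S); auto.
Qed.

Lemma tm_subst_subst M : forall s t,
  tm_subst s (tm_subst t M) = tm_subst (fun n => tm_subst s (t n)) M.
Proof.
  induction M; intros; simpl; rewrite ?IHM, ?IHM1, ?IHM2; try reflexivity.
  - do 2 f_equal; apply functional_extensionality; intros [|m]; simpl; [reflexivity|].
    rewrite tm_subst_ren, tm_ren_subst; reflexivity.
  - do 2 f_equal; apply functional_extensionality; intros n.
    rewrite tm_tsubst_subst; reflexivity.
Qed.

Lemma tm_subst_id M : forall s, (forall n, s n = Var n) -> tm_subst s M = M.
Proof.
  induction M; intros s Hs; simpl; rewrite ?IHM, ?IHM1, ?IHM2; auto.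
  - intros [|m]; simpl; [|rewrite Hs]; reflexivity.
  - intros n; rewrite Hs; reflexivity.
Qed.

Lemma tm_tsubst_subst1 t M N :
  tm_tsubst t (subst1 M N) = subst1 (tm_tsubst t M) (tm_tsubst t N).
Proof.
  unfold subst1; rewrite tm_tsubst_subst; f_equal.
  apply functional_extensionality; intros [|m]; reflexivity.
Qed.

Lemma tm_tsubst_tsubst1 s M A :
  tm_tsubst s (tsubst1 M A) = tsubst1 (tm_tsubst (up_tsub s) M) (subst_trans s A).
Proof.
  unfold tsubst1; rewrite !tm_tsubst_comp; f_equal.
  apply functional_extensionality; intros [|m]; unfold tcomp, subst_trans; simpl.
  - rewrite app_nil_r; reflexivity.
  - rewrite app_nil_r, flat_map_map, (flat_map_singleton _ (fun x => x)), map_id;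
      reflexivity.
Qed.

Lemma tm_subst_tsubst1 s M A :
  tm_subst s (tsubst1 M A) = tsubst1 (tm_subst (fun n => tm_tsubst tshift (s n)) M) A.
Proof.
  unfold tsubst1; rewrite tm_tsubst_subst; f_equal.
  apply functional_extensionality; intros n.
  rewrite tm_tsubst_comp, tm_tsubst_id; reflexivity.
Qed.

Lemma tm_subst_subst1 s M N :
  tm_subst s (subst1 M N) = subst1 (tm_subst (up_sub s) M) (tm_subst s N).
Proof.
  unfold subst1; rewrite !tm_subst_subst; f_equal.
  apply functional_extensionality; intros [|m]; simpl; [reflexivity|].
  rewrite tm_subst_ren, tm_subst_id; reflexivity.
Qed.

Lemma tm_ren_subst1 r M N :
  tm_ren r (subst1 M N) =
  subst1 (tm_ren (fun n => match n with 0 => 0 | S m => S (r m) end) M) (tm_ren r N).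
Proof.
  unfold subst1; rewrite tm_ren_subst, tm_subst_ren; f_equal.
  apply functional_extensionality; intros [|m]; reflexivity.
Qed.

Inductive par : tm -> tm -> Prop :=
| par_var x : par (Var x) (Var x)
| par_app M M' N N' : par M M' -> par N N' -> par (App M N) (App M' N')
| par_lam t M M' : par M M' -> par (Lam t M) (Lam t M')
| par_quo a M M' : par M M' -> par (Quo a M) (Quo a M')
| par_unq a M M' : par M M' -> par (Unq a M) (Unq a M')
| par_tlam M M' : par M M' -> par (TLam M) (TLam M')
| par_tapp M M' A : par M M' -> par (TApp M A) (TApp M' A)
| par_beta t M M' N N' : par M (Lam t M') -> par N N' -> par (App M N) (subst1 M' N')
| par_tbeta M M' A : par M (TLam M') -> par (TApp M A) (tsubst1 M' A)
| par_unq_quo a M N : par M (Quo a N) -> par (Unq a M) N.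

#[local] Hint Constructors par : core.

Lemma par_refl M : par M M.
Proof. induction M; constructor; assumption. Qed.

Lemma par_quo_seq A M M' : par M M' -> par (quo_seq A M) (quo_seq A M').
Proof. intros PM; induction A; [assumption | apply par_quo, IHA]. Qed.

Lemma par_unq_seq A : forall M M', par M M' -> par (unq_seq A M) (unq_seq A M').
Proof. induction A; intros M M' PM; [assumption | apply IHA, par_unq, PM]. Qed.

Lemma par_unq_quo_seq A : forall M N, par M (quo_seq A N) -> par (unq_seq A M) N.
Proof. induction A; intros M N PM; [assumption | apply IHA, par_unq_quo, PM]. Qed.

Lemma par_ren M M' : par M M' -> forall r, par (tm_ren r M) (tm_ren r M').
Proof.
  induction 1; intros r; simpl; auto.
  - rewrite tm_ren_subst1; eauto.
  - unfold tsubst1; rewrite tm_ren_tsubst; apply par_tbeta, IHpar.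
Qed.

Lemma par_tsubst M M' : par M M' -> forall s, par (tm_tsubst s M) (tm_tsubst s M').
Proof.
  induction 1; intros s; simpl;
    auto using par_quo_seq, par_unq_seq, par_unq_quo_seq.
  - rewrite tm_tsubst_subst1; eauto.
  - rewrite tm_tsubst_tsubst1; apply par_tbeta, IHpar.
Qed.

Lemma par_subst M M' : par M M' -> forall s s', (forall n, par (s n) (s' n)) ->
  par (tm_subst s M) (tm_subst s' M').
Proof.
  induction 1; intros s s' Hs; simpl; auto.
  - constructor; apply IHpar; intros [|m]; simpl; auto using par_ren.
  - constructor; apply IHpar; intros n; apply par_tsubst, Hs.
  - rewrite tm_subst_subst1; eapply par_beta; [apply (IHpar1 s s' Hs) | apply IHpar2, Hs].
  - rewrite tm_subst_tsubst1; apply par_tbeta, (IHpar s s' Hs).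
  - apply par_unq_quo, (IHpar s s' Hs).
Qed.

Lemma par_subst1 M M' N N' : par M M' -> par N N' -> par (subst1 M N) (subst1 M' N').
Proof. intros PM PN; apply par_subst; [assumption|]; intros [|m]; auto. Qed.

Fixpoint rho (M : tm) : tm :=
  match M with
  | Var x => Var x
  | App M N => match rho M with
               | Lam _ M' => subst1 M' (rho N)
               | M' => App M' (rho N)
               end
  | Lam t M => Lam t (rho M)
  | Quo a M => Quo a (rho M)
  | Unq a M => match rho M with
               | Quo b N => if Nat.eqb a b then N else Unq a (Quo b N)
               | M' => Unq a M'
               end
  | TLam M => TLam (rho M)
  | TApp M A => match rho M with
                | TLam M' => tsubst1 M' A
                | M' => TApp M' A
                end
  end.

Lemma par_rho M M' : par M M' -> par M' (rho M).
Proof.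
  induction 1; simpl; auto.
  - destruct (rho M); eauto.
  - destruct (rho M) as [| | | b N | | |]; auto.
    destruct (PeanoNat.Nat.eqb_spec a b); subst; auto.
  - destruct (rho M); auto.
  - destruct (rho M); inversion IHpar1; subst; auto using par_subst1.
  - destruct (rho M); inversion IHpar; subst; apply par_tsubst; assumption.
  - destruct (rho M); inversion IHpar; subst; rewrite PeanoNat.Nat.eqb_refl; assumption.
Qed.

Lemma step_par M N : step M N -> par M N.
Proof. induction 1; eauto using par_refl. Qed.

Lemma steps_congr (f : tm -> tm) : (forall M N, step M N -> step (f M) (f N)) ->
  forall M N, steps M N -> steps (f M) (f N).
Proof.
  intros Hf M N MN; induction MN.
  - apply rt_step, Hf; assumption.
  - apply rt_refl.
  - eapply rt_trans; eassumption.
Qed.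

Lemma steps_app M M' N N' : steps M M' -> steps N N' -> steps (App M N) (App M' N').
Proof.
  intros MM' NN'; apply rt_trans with (App M' N).
  - apply (steps_congr (fun X => App X N)); auto using step.
  - apply (steps_congr (App M')); auto using step.
Qed.

Lemma par_steps M N : par M N -> steps M N.
Proof.
  induction 1.
  - apply rt_refl.
  - apply steps_app; assumption.
  - apply (steps_congr (Lam t)); auto using step.
  - apply (steps_congr (Quo a)); auto using step.
  - apply (steps_congr (Unq a)); auto using step.
  - apply (steps_congr TLam); auto using step.
  - apply (steps_congr (fun X => TApp X A)); auto using step.
  - apply rt_trans with (App (Lam t M') N'); [apply steps_app; assumption|].
    apply rt_step, step_beta.
  - apply rt_trans with (TApp (TLam M') A); [|apply rt_step, step_tbeta].
    apply (steps_congr (fun X => TApp X A)); auto using step.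
  - apply rt_trans with (Unq a (Quo a N)); [|apply rt_step, step_quo].
    apply (steps_congr (Unq a)); auto using step.
Qed.

Theorem mainTheorem7 (M N1 N2 : tm) :
  steps M N1 -> steps M N2 ->
  exists N, steps N1 N /\ steps N2 N.
Proof.
  exact (confluent_of_triangle tm step par rho step_par par_steps par_rho M N1 N2).
Qed.
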